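(* Let $m\ge1$, $q=2^m$, let $n$ be odd, and let $L$ and $\lambda$ be $2$-linear polynomials over $\mathbb F_{q^n}$ such that $L^\prime(\ker\mathrm{Tr})=\lambda^\prime(\ker\mathrm{Tr})=\ker\mathrm{Tr}$ and $\mathrm{Tr}(\lambda^\prime(x))=0$ for all $x\in\mathbb F_{q^n}$. Then both $\mathrm{Tr}(x^{q+1})+L(\lambda(x))$ and $\mathrm{Tr}(x^{q+1})+\lambda(L(x))$ are permutation polynomials of $\mathbb F_{q^n}$.
   Context: $\mathrm{Tr}$ denotes the trace map of $\mathbb F_{q^n}$ over $\mathbb F_q$. A $2$-linear polynomial over $\mathbb F_{q^n}$ has the form $\sum_{j=0}^{mn-1}a_jx^{2^j}$; its adjoint is $\sum_j(a_jx)^{2^{-j}}$, where $y\mapsto y^{2^{-j}}$ is the inverse of $y\mapsto y^{2^j}$ on $\mathbb F_{q^n}$. Polynomials are regarded as maps on $\mathbb F_{q^n}$. *)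

From HB Require Import structures.
From mathcomp Require Import all_boot all_order all_algebra all_field.
Set Implicit Arguments. Unset Strict Implicit. Unset Printing Implicit Defensive.
Import GRing.Theory.
Local Open Scope ring_scope.

(* Trace of F_{q^n} over F_q, q = 2^m, viewed as a map F -> F:
   Tr(x) = sum_{i<n} x^(q^i). *)
Definition trq {F : finFieldType} (m n : nat) (x : F) : F :=
  \sum_(i < n) x ^+ ((2 ^ m) ^ i).

Definition kerTr {F : finFieldType} (m n : nat) : {set F} :=
  [set x : F | trq m n x == 0].

Definition lin2 {F : finFieldType} (N : nat) (a : 'I_N -> F) (x : F) : F :=
  \sum_(j < N) a j * x ^+ (2 ^ j).

(* its adjoint  sum_j (a_j x)^(2^{-j}), where y |-> y^(2^{-j}) is the inverse
   of y |-> y^(2^j) on F (|F| = 2^N), i.e. y |-> y^(2^(N-j)) *)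
Definition adj2 {F : finFieldType} (N : nat) (a : 'I_N -> F) (x : F) : F :=
  \sum_(j < N) (a j * x) ^+ (2 ^ (N - j)).

From mathcomp Require Import all_boot all_order all_algebra all_field.
From mathcomp Require Import ring.
Import GRing.Theory.
Local Open Scope ring_scope.

Set Implicit Arguments.
Unset Strict Implicit.
Unset Printing Implicit Defensive.

(* Write q = 2^m, Tr for the trace of F onto F_q, and <x, y> = Tr_{F/F_2}(x y)
   for the nondegenerate trace form, for which lin2 a and adj2 a are adjoint.
   The orthogonal of ker Tr is F_q.  Hence if L(z) is in F_q then
   <z, L'(k)> = <L(z), k> = 0 for all k in ker Tr, and L'(ker Tr) = ker Tr
   forces z in F_q.  If lambda(d) is in F_q then it is orthogonal to ker Tr,
   and since lambda'(F) lies in ker Tr = lambda'(ker Tr), every y differs from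
   an element of ker Tr by an element of ker lambda', so lambda(d) = 0.
   Now let f(x) = Tr(x^(q+1)) + G(x) with G = L o lambda or lambda o L.  If
   f(x) = f(x + d) then G(d) = Tr(x^(q+1)) + Tr((x+d)^(q+1)) lies in F_q, so
   by the above G(d) = 0 and d is in F_q; but then, n being odd,
   Tr((x+d)^(q+1)) = Tr(x^(q+1)) + d^2, whence d = 0. *)

Section Char2.
Variable R : comNzRingType.
Hypothesis ch2 : 2 \in [pchar R].

Lemma expr2nD k (x y : R) : (x + y) ^+ (2 ^ k) = x ^+ (2 ^ k) + y ^+ (2 ^ k).
Proof. by apply: exprDn_pchar; rewrite pnatX (eq_pnat _ (pcharf_eq ch2)). Qed.

Lemma expr2n_sum k I (r : seq I) (P : pred I) (f : I -> R) :
  (\sum_(i <- r | P i) f i) ^+ (2 ^ k) = \sum_(i <- r | P i) f i ^+ (2 ^ k).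
Proof.
apply: (big_morph (fun x => x ^+ (2 ^ k))) => [x y|]; first exact: expr2nD.
by rewrite expr0n expn_eq0.
Qed.

End Char2.

Lemma sum_ord_muln (V : nmodType) (g : nat -> V) a b :
  \sum_(j < a * b) g j = \sum_(i < a) \sum_(k < b) g (i + a * k)%N.
Proof.
rewrite exchange_big /=; elim: b => [|b IH]; first by rewrite muln0 !big_ord0.
rewrite mulnSr big_split_ord IH big_ord_recr /=.
by congr (_ + _); apply: eq_bigr => i _; rewrite addnC.
Qed.

Section Trace.
Variables (F : finFieldType) (N : nat).
Hypothesis cardF : #|F| = (2 ^ N)%N.

Let ch2 : 2 \in [pchar F] := card_finPcharP cardF isT.
Local Notation Tr2 := (trq 1 N).

Lemma expr2N (x : F) : x ^+ (2 ^ N) = x.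
Proof. by rewrite -cardF expf_card. Qed.

Lemma trqD s M (x y : F) : trq s M (x + y) = trq s M x + trq s M y.
Proof.
by rewrite /trq -big_split; apply: eq_bigr => i _; rewrite -expnM (expr2nD ch2).
Qed.

Lemma trq0 s M : trq s M (0 : F) = 0.
Proof. by rewrite /trq big1 // => i _; rewrite expr0n !expn_eq0. Qed.

Lemma trq_sum s M I (r : seq I) (P : pred I) (f : I -> F) :
  trq s M (\sum_(i <- r | P i) f i) = \sum_(i <- r | P i) trq s M (f i).
Proof. exact: (big_morph (trq s M) (trqD s M) (trq0 s M)). Qed.

Lemma trq_frob s M (z : F) : (s * M)%N = N ->
  trq s M (z ^+ (2 ^ s)) = trq s M z.
Proof.
case: M => [|M] sMN; first by rewrite /trq !big_ord0.
rewrite /trq; under eq_bigr do rewrite -exprM -expnS.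
rewrite [RHS]big_ord_recl [LHS]big_ord_recr /= addrC.
by rewrite -expnM sMN expr2N expn0 expr1.
Qed.

Lemma trq_fixed s M (z : F) : (s * M)%N = N ->
  trq s M z ^+ (2 ^ s) = trq s M z.
Proof.
move=> sMN; rewrite -[RHS](trq_frob z sMN) /trq (expr2n_sum ch2).
by apply: eq_bigr => i _; rewrite -!exprM mulnC.
Qed.

Lemma trqZ s M (c k : F) : c ^+ (2 ^ s) = c -> trq s M (c * k) = c * trq s M k.
Proof.
move=> cs; have cX i : c ^+ ((2 ^ s) ^ i) = c.
  by elim: i => [|i IH]; rewrite ?expr1 // expnS exprM cs IH.
by rewrite /trq mulr_sumr; apply: eq_bigr => i _; rewrite exprMn cX.
Qed.

Lemma tr2_expr2n k (z : F) : Tr2 (z ^+ (2 ^ k)) = Tr2 z.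
Proof.
elim: k => [|k IH]; first by rewrite expr1.
by have := trq_frob (z ^+ (2 ^ k)) (mul1n N); rewrite expn1 -exprM -expnSr IH.
Qed.

Lemma tr2_neq0 : exists w : F, Tr2 w != 0.
Proof.
have N_gt0 : (0 < N)%N by rewrite -(ltn_exp2l _ _ (ltnSn 1)) -cardF finNzRing_gt1.
case: (pickP (fun w : F => Tr2 w != 0)) => [w Tr2w|Tr2_0]; first by exists w.
pose P : {poly F} := \sum_(i < N) 'X^(2 ^ i).
have P0 : P = 0.
  apply: (roots_geq_poly_eq0 (rs := enum F)); last 2 first.
  - by rewrite enum_uniq.
  - rewrite -cardE cardF; apply: leq_trans (size_sum _ _ _) _.
    by apply/bigmax_leqP => i _; rewrite size_polyXn ltn_exp2l.
  apply/allP => w _; rewrite /root /P horner_sum.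
  under eq_bigr do rewrite hornerXn.
  by have /negbFE := Tr2_0 w; rewrite /trq expn1.
suff : P`_1 = 1 by rewrite P0 coef0 => /eqP; rewrite eq_sym oner_eq0.
rewrite /P coef_sum -(prednK N_gt0) big_ord_recl /= coefXn expn0 eqxx.
rewrite big1 ?addr0 // => i _; rewrite coefXn expnS.
by case: (2 ^ i)%N (expn_gt0 2 i) => [|t] // _; rewrite mulnS.
Qed.

Lemma tr2_mul_neq0 (z : F) : z != 0 -> exists y, Tr2 (z * y) != 0.
Proof.
by move=> z0; have [w Tr2w] := tr2_neq0; exists (w / z); rewrite mulrC divfK.
Qed.

Lemma lin2D (a : 'I_N -> F) x y : lin2 a (x + y) = lin2 a x + lin2 a y.
Proof.
by rewrite /lin2 -big_split; apply: eq_bigr => i _; rewrite (expr2nD ch2) mulrDr.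
Qed.

Lemma adj2D (a : 'I_N -> F) x y : adj2 a (x + y) = adj2 a x + adj2 a y.
Proof.
by rewrite /adj2 -big_split; apply: eq_bigr => i _; rewrite mulrDr (expr2nD ch2).
Qed.

Lemma tr2_lin2_adj2 (a : 'I_N -> F) x y :
  Tr2 (lin2 a x * y) = Tr2 (x * adj2 a y).
Proof.
rewrite /lin2 /adj2 mulr_suml mulr_sumr !trq_sum; apply: eq_bigr => j _.
have jN : (j <= N)%N := ltnW (ltn_ord j).
rewrite -(tr2_expr2n (N - j)) !exprMn -exprM -expnD subnKC // expr2N.
by congr Tr2; ring.
Qed.

End Trace.

Lemma trq_tower (F : finFieldType) (ch2 : 2 \in [pchar F]) m n (z : F) :
  trq 1 (m * n) z = trq 1 m (trq m n z).
Proof.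
rewrite {1}/trq (sum_ord_muln (fun j => z ^+ ((2 ^ 1) ^ j))).
apply: eq_bigr => i _; rewrite /trq (expr2n_sum ch2); apply: eq_bigr => k _.
by rewrite -exprM -!expnM -expnD addnC mul1n.
Qed.

Lemma lin20 (F : finFieldType) N (a : 'I_N -> F) : lin2 a 0 = 0.
Proof. by rewrite /lin2 big1 // => i _; rewrite expr0n expn_eq0 mulr0. Qed.

Section Subfield.
Variables (F : finFieldType) (m n : nat).
Hypothesis cardF : #|F| = (2 ^ (m * n))%N.

Let ch2 : 2 \in [pchar F] := card_finPcharP cardF isT.
Local Notation q := (2 ^ m)%N.
Local Notation Tr := (trq m n).
Local Notation Tr2 := (trq 1 (m * n)).

Lemma tr2_fixed_kerTr (c k : F) : c ^+ q = c -> Tr k = 0 -> Tr2 (c * k) = 0.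
Proof. by move=> cq Trk; rewrite (trq_tower ch2) trqZ // Trk mulr0 trq0. Qed.

Lemma fixed_of_tr2_kerTr (x : F) :
  (forall k, Tr k = 0 -> Tr2 (x * k) = 0) -> x ^+ q = x.
Proof.
move=> xperp; apply/eqP; apply: contraT => xNfixed.
have n_gt0 : (0 < n)%N.
  by case: n cardF => // /eqP; rewrite muln0 expn0 eqn_leq ltn_geF ?finNzRing_gt1.
pose u := x ^+ (q ^ n.-1).
have uq : u ^+ q = x by rewrite -exprM -expnSr prednK // -expnM expr2N.
have ux0 : u + x != 0.
  move: xNfixed; apply: contra; rewrite addr_eq0 (oppr_pchar2 ch2) => /eqP ux.
  by rewrite -{1}ux uq.
have [y uxy] := tr2_mul_neq0 cardF ux0.
have kery : Tr (y ^+ q + y) = 0.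
  by rewrite (trqD cardF) (trq_frob cardF) ?(addrr_pchar2 ch2).
move: uxy; rewrite mulrDl (trqD cardF) -(tr2_expr2n cardF m (u * y)) exprMn uq.
by rewrite -(trqD cardF) -mulrDr xperp ?eqxx.
Qed.

Lemma trq1 : odd n -> Tr (1 : F) = 1.
Proof.
move=> n_odd; rewrite /trq (eq_bigr (fun=> 1)) => [|i _]; last by rewrite expr1n.
rewrite sumr_const card_ord -[n]odd_double_half n_odd -muln2 mulrnDr.
by rewrite natrM (pcharf0 ch2) mulr0 addr0.
Qed.

Lemma trq_expSq_add_fixed (x c : F) : odd n -> c ^+ q = c ->
  Tr ((x + c) ^+ (q + 1)) = Tr (x ^+ (q + 1)) + c ^+ 2.
Proof.
move=> n_odd cq; have c2q : (c * c) ^+ q = c * c by rewrite exprMn cq.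
have -> : (x + c) ^+ (q + 1) = x ^+ (q + 1) + c * (x ^+ q + x) + c * c * 1.
  by rewrite addn1 !exprSr (expr2nD ch2) cq; ring.
rewrite !(trqD cardF) !trqZ // trq1 // (trqD cardF) (trq_frob cardF) //.
by rewrite (addrr_pchar2 ch2) mulr0 addr0 mulr1 expr2.
Qed.

Lemma injective_trq_expSq_add (G : F -> F) : odd n ->
  (forall x y, G (x + y) = G x + G y) ->
  (forall d, G d ^+ q = G d -> G d = 0 /\ d ^+ q = d) ->
  injective (fun x => Tr (x ^+ (q + 1)) + G x).
Proof.
move=> n_odd GD Gfixed x y; rewrite -[y](subrKC x) /=; move: (y - x) => d.
rewrite GD addrCA [_ + G x]addrC => /addrI fxd.
have Gd : G d = Tr (x ^+ (q + 1)) + Tr ((x + d) ^+ (q + 1)).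
  by rewrite fxd addrAC (addrr_pchar2 ch2) add0r.
have [Gd0 dq] : G d = 0 /\ d ^+ q = d.
  by apply: Gfixed; rewrite Gd (expr2nD ch2) !(trq_fixed cardF).
move: Gd; rewrite Gd0 trq_expSq_add_fixed // addrA (addrr_pchar2 ch2) add0r.
by move=> /esym/eqP; rewrite sqrf_eq0 => /eqP ->; rewrite addr0.
Qed.

Lemma adj2_kerTrP (a : 'I_(m * n) -> F) k :
  kerTr m n \subset adj2 a @: kerTr m n -> Tr k = 0 ->
  exists2 k', Tr k' = 0 & k = adj2 a k'.
Proof.
move=> onto Trk; have /imsetP[k' + ->] : k \in adj2 a @: kerTr m n.
  by apply: (subsetP onto); rewrite inE Trk.
by rewrite inE => /eqP; exists k'.
Qed.

Lemma fixed_of_lin2_fixed (a : 'I_(m * n) -> F) z :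
  kerTr m n \subset adj2 a @: kerTr m n ->
  lin2 a z ^+ q = lin2 a z -> z ^+ q = z.
Proof.
move=> onto Lz; apply: fixed_of_tr2_kerTr => k /(adj2_kerTrP onto)[k' Trk' ->].
by rewrite -(tr2_lin2_adj2 cardF) tr2_fixed_kerTr.
Qed.

Lemma lin2_fixed_eq0 (b : 'I_(m * n) -> F) d :
  kerTr m n \subset adj2 b @: kerTr m n -> (forall y, Tr (adj2 b y) = 0) ->
  lin2 b d ^+ q = lin2 b d -> lin2 b d = 0.
Proof.
move=> onto Trb0 bd; apply/eqP; apply: contraT => /(tr2_mul_neq0 cardF)[y].
have [k Trk bk] := adj2_kerTrP onto (Trb0 y).
have -> : y = (y + k) + k by rewrite -addrA (addrr_pchar2 ch2) addr0.
rewrite mulrDr (trqD cardF) (tr2_fixed_kerTr bd Trk) addr0.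
rewrite (tr2_lin2_adj2 cardF) (adj2D cardF) bk.
by rewrite (addrr_pchar2 ch2) mulr0 trq0 eqxx.
Qed.

End Subfield.

Theorem mainTheorem8 (F : finFieldType) (m n : nat)
  (a b : 'I_(m * n) -> F) :
  (0 < m)%N -> odd n -> #|F| = ((2 ^ m) ^ n)%N ->
  [set adj2 a x | x in kerTr m n] = kerTr (F := F) m n ->
  [set adj2 b x | x in kerTr m n] = kerTr (F := F) m n ->
  (forall x : F, trq m n (adj2 b x) = 0) ->
  bijective (fun x : F => trq m n (x ^+ (2 ^ m + 1)) + lin2 a (lin2 b x)) /\
  bijective (fun x : F => trq m n (x ^+ (2 ^ m + 1)) + lin2 b (lin2 a x)).
Proof.
(* [0 < m] is implied by [1 < #|F|]. *)
move=> _ n_odd cardF Ka Kb Trb0; rewrite -expnM in cardF.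
have ontoA : kerTr m n \subset adj2 a @: kerTr m n by rewrite Ka.
have ontoB : kerTr m n \subset adj2 b @: kerTr m n by rewrite Kb.
split; apply: injF_bij; apply: (injective_trq_expSq_add cardF n_odd).
- by move=> x y; rewrite !(lin2D cardF).
- move=> d /(fixed_of_lin2_fixed cardF ontoA).
  move=> /(lin2_fixed_eq0 cardF ontoB Trb0) bd0.
  split; first by rewrite bd0 lin20.
  by apply: (fixed_of_lin2_fixed cardF ontoB); rewrite bd0 expr0n expn_eq0.
- by move=> x y; rewrite !(lin2D cardF).
- move=> d /(lin2_fixed_eq0 cardF ontoB Trb0) bad0; split; first exact: bad0.
  apply: (fixed_of_lin2_fixed cardF ontoA).
  apply: (fixed_of_lin2_fixed cardF ontoB).
  by rewrite bad0 expr0n expn_eq0.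
Qed.
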